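(* Let $G\subset\mathbb R^r$ be a lattice of rank $r$ and let $\mathcal D$ be a linear partial differential operator on $\mathbb R^r$ with continuous $G$-periodic (real or complex) coefficients. Let $\mathcal S$ be the space of all classical global solutions $u$ of $\mathcal Du=0$ on $\mathbb R^r$, and $\mathcal S^G$ the subspace of $G$-periodic solutions. If $\dim\mathcal S^G<\infty$, then $\dim P_n^G(\mathcal S)<\infty$ for every $n\in\mathbb Z_+$, where $$P_n^G(\mathcal S)=\Big\{p=\sum_{j_1+\dots+j_r\le n}f_{j_1,\dots,j_r}(x)\,x_1^{j_1}\cdots x_r^{j_r}\ :\ \text{all } f_{j_1,\dots,j_r}\text{ continuous and } G\text{-periodic},\ \mathcal Dp=0\Big\}.$$
   Context: A function $f$ on $\mathbb R^r$ is $G$-periodic if $f(x+g)=f(x)$ for all $g\in G$, $x\in\mathbb R^r$; $x_1,\dots,x_r$ are the standard coordinates. *)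

From HB Require Import structures.
From mathcomp Require Import all_boot all_order all_algebra.
From mathcomp Require Import all_classical all_reals all_analysis.
From mathcomp Require Import complex.
From Stdlib Require List.

Set Implicit Arguments.
Unset Strict Implicit.
Unset Printing Implicit Defensive.
Import Order.TTheory GRing.Theory Num.Theory.
Import numFieldNormedType.Exports.
Local Open Scope ring_scope.

Section PDO.
Variables (R : realType) (r : nat).

(* Points of R^r are row vectors; x_i = x 0 i. *)
Notation pt := 'rV[R]_r.
Notation C := (complex.complex R).

Definition unitvec (i : 'I_r) : pt := \row_(j < r) (i == j)%:R.

Definition reF (f : pt -> C) : pt -> R := fun x => complex.Re (f x).
Definition imF (f : pt -> C) : pt -> R := fun x => complex.Im (f x).

Definition cpartial (i : 'I_r) (f : pt -> C) : pt -> C :=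
  fun x => complex.Complex ('D_(unitvec i) (reF f) x) ('D_(unitvec i) (imF f) x).

Definition cderivable (i : 'I_r) (f : pt -> C) (x : pt) : Prop :=
  derivable (reF f) x (unitvec i) /\ derivable (imF f) x (unitvec i).

Definition ccontinuous (f : pt -> C) : Prop :=
  continuous (reF f) /\ continuous (imF f).

Definition cpartials (s : seq 'I_r) (f : pt -> C) : pt -> C :=
  foldr cpartial f s.

Definition isCk (m : nat) (f : pt -> C) : Prop :=
  forall s : seq 'I_r,
    (size s <= m)%N ->
    ccontinuous (cpartials s f) /\
    ((size s < m)%N -> forall (i : 'I_r) (x : pt), cderivable i (cpartials s f) x).

(* A linear partial differential operator  D u = \sum_k a_k(x) d^{s_k} u,
   given as a finite list of pairs (coefficient a_k, multi-index s_k),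
   a multi-index being written as the list of differentiation variables. *)
Definition pdo := seq ((pt -> C) * seq 'I_r).

Definition pdo_order (D : pdo) : nat := \max_(t <- D) size t.2.

Definition pdo_apply (D : pdo) (u : pt -> C) : pt -> C :=
  fun x => \sum_(t <- D) t.1 x * cpartials t.2 u x.

Definition classical_solution (D : pdo) (u : pt -> C) : Prop :=
  isCk (pdo_order D) u /\ forall x, pdo_apply D u x = 0.

(* The lattice G = Z b_1 + ... + Z b_r, where b_1..b_r are the rows of B. *)
Definition lattice_elt (B : 'M[R]_r) (k : 'rV[int]_r) : pt :=
  map_mx (fun z : int => z%:~R) k *m B.

Definition lattice_periodic {T : Type} (B : 'M[R]_r) (f : pt -> T) : Prop :=
  forall (k : 'rV[int]_r) (x : pt), f (x + lattice_elt B k) = f x.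

Definition finite_dim (S : set (pt -> C)) : Prop :=
  exists (N : nat) (b : 'I_N -> pt -> C),
    forall u, S u -> exists c : 'I_N -> C, u = fun x => \sum_(j < N) c j * b j x.

Definition sol_space (D : pdo) : set (pt -> C) := [set u | classical_solution D u].

Definition per_sol_space (B : 'M[R]_r) (D : pdo) : set (pt -> C) :=
  [set u | classical_solution D u /\ lattice_periodic B u].

Definition monomial (n : nat) (alpha : {ffun 'I_r -> 'I_n.+1}) (x : pt) : R :=
  \prod_(i < r) (x 0 i) ^+ (alpha i).

Definition mdeg (n : nat) (alpha : {ffun 'I_r -> 'I_n.+1}) : nat :=
  \sum_(i < r) (alpha i : nat).

Definition PnG (B : 'M[R]_r) (D : pdo) (n : nat) : set (pt -> C) :=
  [set p | classical_solution D p /\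
     exists f : {ffun 'I_r -> 'I_n.+1} -> pt -> C,
       (forall alpha, ccontinuous (f alpha) /\ lattice_periodic B (f alpha)) /\
       p = fun x => \sum_(alpha | (mdeg alpha <= n)%N)
                       f alpha x * complex.real_complex R (monomial alpha x)].

End PDO.

(* Let Q_m be the space of solutions [\sum_(|al| < m) f_al(x) x^al] with continuous
   G-periodic f_al, so that Q_0 = 0 and P_n^G(S) = Q_(n+1).  For g in G the difference
   operator u |-> u(. + g) - u preserves solutions (the coefficients of D are
   g-periodic) and maps Q_(m+1) into Q_m, because (x + g)^al - x^al has degree < |al|
   and the f_al are g-periodic.  A solution killed by the differences along the rows
   of B is G-periodic, i.e. lies in S^G.  Hence Q_(m+1) is spanned by preimages of
   spanning families of its images in Q_m together with a spanning family of S^G,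
   and induction on m concludes. *)

From HB Require Import structures.
From mathcomp Require Import all_boot all_order all_algebra.
From mathcomp Require Import all_classical all_reals all_analysis.
From mathcomp Require Import complex.
From Stdlib Require List.

Set Implicit Arguments.
Unset Strict Implicit.
Unset Printing Implicit Defensive.
Import Order.TTheory GRing.Theory Num.Theory.
Import numFieldNormedType.Exports.
Local Open Scope ring_scope.
Local Open Scope classical_set_scope.

Lemma lift_seq_image (T U : Type) (f : T -> U) (A : set T) (p : seq U) :
  (forall y, List.In y p -> (f @` A) y) ->
  exists q, (forall x, List.In x q -> A x) /\ map f q = p.
Proof.
elim: p => [|y p IHp] pA; first by exists [::].
have [x Ax <-] := pA y (or_introl erefl).
have [q [qA <-]] := IHp (fun z pz => pA z (or_intror pz)).
by exists (x :: q); split=> // z [<-|/qA].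
Qed.

Section Span.
Variables (F : fieldType) (V : lmodType F).

Definition in_span (s : seq V) (w : V) :=
  exists c : nat -> F, w = \sum_(i < size s) c i *: s`_i.

Definition finitely_spanned (S : set V) := exists s, forall u, S u -> in_span s u.

Definition linear_subspace (S : set V) :=
  S 0 /\ forall a u v, S u -> S v -> S (a *: u + v).

Lemma in_span_nil w : in_span [::] w -> w = 0.
Proof. by case=> c ->; rewrite big_ord0. Qed.

Lemma in_span_cons x s w : in_span (x :: s) w <->
  exists a (c : nat -> F), w = a *: x + \sum_(i < size s) c i *: s`_i.
Proof.
split=> [[c ->]|[a [c ->]]].
  by exists (c 0%N), (fun i => c i.+1); rewrite big_ord_recl.
by exists (fun i => if i is i'.+1 then c i' else a); rewrite big_ord_recl.
Qed.

Lemma in_span0 s : in_span s 0.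
Proof. by exists (fun _ => 0); rewrite big1 // => i _; rewrite scale0r. Qed.

Lemma in_spanZD s a u v : in_span s u -> in_span s v -> in_span s (a *: u + v).
Proof.
case=> c -> [d ->]; exists (fun i => a * c i + d i).
rewrite scaler_sumr -big_split; apply: eq_bigr => i _.
by rewrite scalerA scalerDl.
Qed.

Lemma in_span_cat s t u v : in_span s u -> in_span t v -> in_span (s ++ t) (u + v).
Proof.
case=> c -> [d ->].
exists (fun i => if (i < size s)%N then c i else d (i - size s)%N).
rewrite size_cat big_split_ord; congr (_ + _); apply: eq_bigr => i _ /=.
  by rewrite ltn_ord nth_cat ltn_ord.
by rewrite ltnNge leq_addr /= nth_cat ltnNge leq_addr /= addKn.
Qed.

Lemma linear_subspaceI (S T : set V) :
  linear_subspace S -> linear_subspace T -> linear_subspace (S `&` T).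
Proof.
by move=> [S0 SZD] [T0 TZD]; split=> // a u v [Su Tu] [Sv Tv]; split; [apply: SZD | apply: TZD].
Qed.

Lemma linear_subspace_span s : linear_subspace (in_span s).
Proof. by split; [apply: in_span0 | apply: in_spanZD]. Qed.

Lemma linear_subspaceD (S : set V) u v : linear_subspace S -> S u -> S v -> S (u + v).
Proof. by move=> [_ SZD] Su Sv; rewrite -[u]scale1r; apply: SZD. Qed.

Lemma linear_subspaceB (S : set V) u v : linear_subspace S -> S u -> S v -> S (u - v).
Proof.
by move=> [_ SZD] Su Sv; rewrite addrC -scaleN1r; apply: SZD.
Qed.

Lemma in_span_subspace (S : set V) s w : linear_subspace S ->
  (forall x, List.In x s -> S x) -> in_span s w -> S w.
Proof.
move=> [S0 SZD]; elim: s w => [|x s IHs] w sS; first by move/in_span_nil ->.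
case/in_span_cons=> a [c ->]; apply: SZD; first by apply: sS; left.
by apply: IHs; [move=> y sy; apply: sS; right | exists c].
Qed.

Lemma linear_subspaceZ (S : set V) a u : linear_subspace S -> S u -> S (a *: u).
Proof. by move=> [S0 SZD] Su; rewrite -[_ *: _]addr0; apply: SZD. Qed.

Lemma linear_subspace_sum (S : set V) (I : Type) (r : seq I) (P : pred I) (G : I -> V) :
  linear_subspace S -> (forall i, P i -> S (G i)) -> S (\sum_(i <- r | P i) G i).
Proof.
by move=> sS SG; apply: big_ind => //; [case: sS | move=> u v; apply: linear_subspaceD].
Qed.

Lemma in_span_family n (b : 'I_n -> V) (c : 'I_n -> F) :
  in_span [seq b j | j <- enum 'I_n] (\sum_j c j *: b j).
Proof.
elim: n b c => [|n IHn] b c; first by rewrite big_ord0; apply: in_span0.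
rewrite big_ord_recl enum_ordSl /= -map_comp; apply/in_span_cons.
by have [d ->] := IHn (b \o lift ord0) (c \o lift ord0); exists (c ord0), d.
Qed.

Lemma finitely_spannedS (S T : set V) :
  S `<=` T -> finitely_spanned T -> finitely_spanned S.
Proof. by move=> ST [s sT]; exists s => u /ST; apply: sT. Qed.

(* Induction on [b]: an element of [S] with a nonzero [b0]-coordinate, if any,
   absorbs the [b0]-coordinates of all the others. *)
Lemma subspace_spanned_from_within (S : set V) b :
  linear_subspace S -> (forall w, S w -> in_span b w) ->
  exists p, (forall x, List.In x p -> S x) /\ (forall w, S w -> in_span p w).
Proof.
elim: b S => [|b0 b IHb] S sS Sb.
  by exists [::]; split=> // w /Sb /in_span_nil ->; apply: in_span0.
have [p [pS Sp]] := IHb (S `&` in_span b)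
  (linear_subspaceI sS (linear_subspace_span b)) (fun w => @proj2 _ _).
have [[w0 [a [c [Sw0 [a0 ew0]]]]]|no_w0] := pselect (exists w0 a (c : nat -> F),
    [/\ S w0, a != 0 & w0 = a *: b0 + \sum_(i < size b) c i *: b`_i]).
  exists (w0 :: p); split=> [x [<-|/pS []]|w Sw] //.
  have /in_span_cons [d [e ew]] := Sb w Sw.
  have Sw' : (S `&` in_span b) (- (d / a) *: w0 + w).
    split; first by case: sS => _; apply.
    exists (fun i => e i - d / a * c i).
    rewrite ew ew0 scalerDr scalerA addrACA mulNr divfK // scaleNr addNr add0r.
    rewrite scaler_sumr -big_split; apply: eq_bigr => i _.
    by rewrite scalerA scalerDl addrC mulNr scaleNr.
  have [f ef] := Sp _ Sw'.
  apply/in_span_cons; exists (d / a), f.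
  by rewrite -ef addrA scaleNr addrN add0r.
exists p; split=> [x /pS [] //|w Sw]; apply: Sp; split=> //.
have /in_span_cons [d [e ew]] := Sb w Sw.
have [d0|dn0] := eqVneq d 0; first by exists e; rewrite ew d0 scale0r add0r.
by case: no_w0; exists w, d, e.
Qed.

End Span.

Section LinearImage.
Variables (F : fieldType) (V W : lmodType F).

Lemma in_span_map_linear (L : {linear V -> W}) q y :
  in_span (map L q) y -> exists2 v, in_span q v & y = L v.
Proof.
case=> c ->; exists (\sum_(i < size q) c i *: q`_i); first by exists c.
rewrite linear_sum size_map; apply: eq_bigr => i _.
by rewrite linearZ (nth_map 0).
Qed.

Lemma linear_subspace_image (L : {linear V -> W}) (S : set V) :
  linear_subspace S -> linear_subspace (L @` S).
Proof.
move=> [S0 SZD]; split=> [|a _ _ [u Su <-] [v Sv <-]]; first by exists 0; rewrite ?linear0.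
by exists (a *: u + v); [apply: SZD | rewrite linearP].
Qed.

Lemma linear_subspace_kernel (L : {linear V -> W}) : linear_subspace [set u | L u = 0].
Proof.
split=> [|a u v /= Lu Lv]; first exact: linear0.
by rewrite linearP Lu Lv scaler0 addr0.
Qed.

(* [S] is spanned by preimages of a spanning family of [L @` S] chosen inside
   [L @` S], together with a spanning family of the kernel. *)
Lemma finitely_spanned_image_kernel (L : {linear V -> W}) (S : set V) :
  linear_subspace S -> finitely_spanned (L @` S) ->
  finitely_spanned (S `&` [set u | L u = 0]) -> finitely_spanned S.
Proof.
move=> sS [t LSt] [s0 kers0].
have [p [pLS LSp]] := subspace_spanned_from_within (linear_subspace_image L sS) LSt.
have [q [qS qp]] := lift_seq_image pLS; rewrite -qp in LSp.
exists (q ++ s0) => u Su.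
have [v qv Lv] := in_span_map_linear (LSp _ (imageP L Su)).
have Sv : S v := in_span_subspace sS qS qv.
rewrite -[u](addrNK v) addrC; apply: in_span_cat => //; apply: kers0; split.
  exact: linear_subspaceB.
by rewrite /= linearB /= Lv subrr.
Qed.

Lemma finitely_spanned_images_kernel (I : eqType) (L : I -> {linear V -> W})
    (s : seq I) (S : set V) :
  linear_subspace S -> (forall i, i \in s -> finitely_spanned (L i @` S)) ->
  finitely_spanned (S `&` [set u | forall i, i \in s -> L i u = 0]) ->
  finitely_spanned S.
Proof.
elim: s S => [|i s IHs] S sS LS kerS.
  by apply: finitely_spannedS kerS => u Su; split.
apply: (finitely_spanned_image_kernel (L := L i)) => //.
  by apply: LS; rewrite mem_head.
apply: IHs.
- exact: linear_subspaceI sS (linear_subspace_kernel (L i)).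
- move=> j js; apply: finitely_spannedS (LS j _); last by rewrite inE js orbT.
  by move=> _ [u [Su _] <-]; exists u.
- apply: finitely_spannedS kerS => u [[Su Lu] Ls0]; split=> // j.
  by rewrite inE => /predU1P [->|/Ls0].
Qed.

End LinearImage.

Section ForwardDifference.
Variables (K : pzRingType) (V : zmodType) (M : lmodType K).

Definition fdiff (g : V) (u : V -> M) : V -> M := u \o shift g - u.

Lemma fdiff_is_linear g : linear (fdiff g).
Proof.
by move=> a u v; apply/funext => x; rewrite /fdiff !fctE /= scalerBr addrACA opprD.
Qed.

HB.instance Definition _ g :=
  GRing.isLinear.Build K (V -> M) (V -> M) _ (fdiff g) (fdiff_is_linear g).

Lemma fdiff_eq0 g u : fdiff g u = 0 <-> forall x, u (x + g) = u x.
Proof.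
rewrite /fdiff; split=> [/(congr1 (fun f => f _)) eq0 x | per].
  by apply/eqP; rewrite -subr_eq0; apply/eqP/eq0.
by apply/funext => x; rewrite !fctE /= per subrr.
Qed.

End ForwardDifference.

Lemma periodic_mulz (V : zmodType) (T : Type) (u : V -> T) (g : V) :
  (forall x, u (x + g) = u x) -> forall (z : int) x, u (x + g *~ z) = u x.
Proof.
move=> per; have perN n x : u (x + g *+ n) = u x.
  by elim: n x => [|n IHn] x; rewrite ?mulr0n ?addr0 // mulrSr addrA per IHn.
by case=> n x; rewrite ?NegzE ?mulrNz -pmulrn // -{2}[x](subrK (g *+ n.+1)) perN.
Qed.

Section Shift.
Variables (K : numFieldType) (V W : normedModType K).
Implicit Types (f : V -> W) (g x v : V).

Lemma comp_shiftD f g x : (f \o shift g) \o shift x = f \o shift (x + g).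
Proof. by apply/funext => y /=; rewrite addrA. Qed.

Lemma derive_comp_shift f g x v : 'D_v (f \o shift g) x = 'D_v f (x + g).
Proof. by rewrite /derive comp_shiftD. Qed.

Lemma derivable_comp_shift f g x v :
  derivable f (x + g) v -> derivable (f \o shift g) x v.
Proof. by rewrite /derivable comp_shiftD. Qed.

Lemma continuous_comp_shift f g : continuous f -> continuous (f \o shift g).
Proof.
move=> cf x; apply: (@continuous_comp _ _ _ (shift g) f x); last exact: cf.
exact: (@continuousD _ _ _ id (cst g) x cvg_id (@cst_continuous _ _ g x)).
Qed.

End Shift.

Section ComplexPartials.
Variables (R : realType) (r : nat).
Local Notation pt := 'rV[R]_r.
Local Notation C := (complex.complex R).
Implicit Types (a : C) (u v : pt -> C).

Lemma reF_scaleD a u v :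
  reF (a *: u + v) = complex.Re a \*: reF u - complex.Im a \*: imF u + reF v.
Proof.
apply/funext => x; rewrite /reF /imF !fctE /=.
by case: a (u x) (v x) => [a1 a2] [b1 b2] [c1 c2] /=.
Qed.

Lemma imF_scaleD a u v :
  imF (a *: u + v) = complex.Im a \*: reF u + complex.Re a \*: imF u + imF v.
Proof.
apply/funext => x; rewrite /reF /imF !fctE /=.
by case: a (u x) (v x) => [a1 a2] [b1 b2] [c1 c2] /=; rewrite [_ + a2 * _]addrC.
Qed.

Lemma ccontinuous_scaleD a u v :
  ccontinuous u -> ccontinuous v -> ccontinuous (a *: u + v).
Proof.
move=> [ur ui] [vr vi]; rewrite /ccontinuous reF_scaleD imF_scaleD.
split=> x; do ![apply: continuousD | apply: continuousN | apply: continuousZl_tmp].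
all: by [apply: ur | apply: ui | apply: vr | apply: vi].
Qed.

Lemma cderivable_scaleD i a u v x :
  cderivable i u x -> cderivable i v x -> cderivable i (a *: u + v) x.
Proof.
move=> [/derivableP ur /derivableP ui] [/derivableP vr /derivableP vi].
by rewrite /cderivable reF_scaleD imF_scaleD; split; apply: ex_derive.
Qed.

Lemma cpartial_scaleD i a u v x : cderivable i u x -> cderivable i v x ->
  cpartial i (a *: u + v) x = a * cpartial i u x + cpartial i v x.
Proof.
move=> [/derivableP ur /derivableP ui] [/derivableP vr /derivableP vi].
rewrite /cpartial reF_scaleD imF_scaleD derive_val.
rewrite [X in (_ +i* X)%C]derive_val.
by case: a => a1 a2 /=; congr (_ +i* _)%C; rewrite [_ * _ + _]addrC.
Qed.

Lemma cpartials_cons i s u : cpartials (i :: s) u = cpartial i (cpartials s u).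
Proof. by []. Qed.

Lemma cpartials_scaleD m a u v s : isCk m u -> isCk m v -> (size s <= m)%N ->
  cpartials s (a *: u + v) = a *: cpartials s u + cpartials s v.
Proof.
move=> Cu Cv; elim: s => [|i s IHs] ltsm; first reflexivity.
have ltsm' : (size s <= m)%N := ltnW ltsm.
rewrite !cpartials_cons IHs //; apply/funext => x.
rewrite cpartial_scaleD; [reflexivity | exact: (Cu s ltsm').2 | exact: (Cv s ltsm').2].
Qed.

Lemma isCk_scaleD m a u v : isCk m u -> isCk m v -> isCk m (a *: u + v).
Proof.
move=> Cu Cv s sm; rewrite (cpartials_scaleD a Cu Cv sm); split.
  exact: ccontinuous_scaleD (Cu s sm).1 (Cv s sm).1.
by move=> ltsm i x; apply: cderivable_scaleD; [apply: (Cu s sm).2 | apply: (Cv s sm).2].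
Qed.

Lemma cpartials0 s : cpartials s (0 : pt -> C) = 0.
Proof.
elim: s => [|i s IHs] //; rewrite cpartials_cons IHs; apply/funext => x.
by rewrite /cpartial !derive_cst.
Qed.

Lemma isCk0 m : isCk m (0 : pt -> C).
Proof.
move=> s _; rewrite cpartials0; split; first by split; apply: cst_continuous.
by move=> _ i x; split; apply: derivable_cst.
Qed.

Lemma cpartial_comp_shift i g u : cpartial i (u \o shift g) = cpartial i u \o shift g.
Proof.
by apply/funext => x; congr (_ +i* _)%C; apply: derive_comp_shift.
Qed.

Lemma cpartials_comp_shift s g u :
  cpartials s (u \o shift g) = cpartials s u \o shift g.
Proof. by elim: s => [|i s IHs] //; rewrite !cpartials_cons IHs cpartial_comp_shift. Qed.

Lemma isCk_comp_shift m g u : isCk m u -> isCk m (u \o shift g).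
Proof.
move=> Cu s sm; rewrite cpartials_comp_shift; have [[cr ci] dC] := Cu s sm.
split; first by split; [exact: continuous_comp_shift cr | exact: continuous_comp_shift ci].
move=> ltsm i x; have [dr di] := dC ltsm i (x + g).
by split; [exact: (derivable_comp_shift dr) | exact: (derivable_comp_shift di)].
Qed.

End ComplexPartials.

Lemma eq_big_In (I : Type) (M : nmodType) (s : seq I) (F G : I -> M) :
  (forall i, List.In i s -> F i = G i) -> \sum_(i <- s) F i = \sum_(i <- s) G i.
Proof.
elim: s => [|i s IHs] FG; first by rewrite !big_nil.
rewrite !big_cons FG; last by left.
by rewrite IHs // => j sj; apply: FG; right.
Qed.

Lemma pdo_order_ge (R : realType) (r : nat) (D : pdo R r) t :
  List.In t D -> (size t.2 <= pdo_order D)%N.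
Proof.
rewrite /pdo_order; elim: D => [|t0 D IHD] //= [<-|tD]; rewrite big_cons.
  exact: leq_maxl.
exact: leq_trans (IHD tD) (leq_maxr _ _).
Qed.

Section ClassicalSolutions.
Variables (R : realType) (r : nat) (D : pdo R r).
Local Notation pt := 'rV[R]_r.
Local Notation C := (complex.complex R).
Implicit Types (a : C) (u v : pt -> C).

Lemma pdo_apply_scaleD a u v x :
  isCk (pdo_order D) u -> isCk (pdo_order D) v ->
  pdo_apply D (a *: u + v) x = a * pdo_apply D u x + pdo_apply D v x.
Proof.
move=> Cu Cv; rewrite /pdo_apply mulr_sumr -big_split; apply: eq_big_In => t tD.
rewrite (cpartials_scaleD a Cu Cv (pdo_order_ge tD)) !fctE mulrDr.
by congr (_ + _); exact: mulrCA.
Qed.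

Lemma classical_solution_scaleD a u v : classical_solution D u ->
  classical_solution D v -> classical_solution D (a *: u + v).
Proof.
move=> [Cu Du] [Cv Dv]; split=> [|x]; first exact: isCk_scaleD.
by rewrite pdo_apply_scaleD // Du Dv mulr0 addr0.
Qed.

Lemma sol_space_subspace : linear_subspace (sol_space D).
Proof.
split=> [|a u v]; last exact: classical_solution_scaleD.
split=> [|x]; first exact: isCk0.
by rewrite /pdo_apply big1 // => t _; rewrite cpartials0 mulr0.
Qed.

Lemma classical_solution_comp_shift g u :
  (forall t, List.In t D -> forall x, t.1 (x + g) = t.1 x) ->
  classical_solution D u -> classical_solution D (u \o shift g).
Proof.
move=> Dper [Cu Du]; split=> [|x]; first exact: isCk_comp_shift.
rewrite -(Du (x + g)) /pdo_apply; apply: eq_big_In => t tD.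
by rewrite cpartials_comp_shift /= Dper.
Qed.

End ClassicalSolutions.

Section MonomialShift.
Variables (R : realType) (r N : nat).
Local Notation pt := 'rV[R]_r.
Local Notation mono := {ffun 'I_r -> 'I_N.+1}.
Local Notation C := (complex.complex R).
Local Notation RC := (real_complex R).
Implicit Types (al be : mono) (g x : pt).

Definition shift_coef g al be : R :=
  \prod_i (if (be i <= al i)%N then 'C(al i, be i)%:R * g 0 i ^+ (al i - be i) else 0).

(* Expand each factor of [(x + g)^al] by the binomial theorem, then distribute. *)
Lemma monomialD al x g : monomial al (x + g) = \sum_be shift_coef g al be * monomial be x.
Proof.
rewrite /monomial; transitivity (\prod_i \sum_(j < N.+1)
  ((if (j <= al i)%N then 'C(al i, j)%:R * g 0 i ^+ (al i - j) else 0) * x 0 i ^+ j)).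
  apply: eq_bigr => i _; rewrite mxE addrC exprDn.
  rewrite (big_ord_widen N.+1 (fun j => g 0 i ^+ (al i - j) * x 0 i ^+ j *+ 'C(al i, j))
    (ltn_ord (al i))) big_mkcond; apply: eq_bigr => j _; rewrite ltnS.
  by case: ifP => _; rewrite ?mul0r // -mulr_natl mulrA [_ * g 0 i ^+ _]mulrC.
by rewrite bigA_distr_bigA; apply: eq_bigr => be _; rewrite -big_split.
Qed.

Lemma shift_coef_id g al : shift_coef g al al = 1.
Proof. by rewrite /shift_coef big1 // => i _; rewrite leqnn binn subnn mulr1. Qed.

Lemma shift_coef_le g al be : shift_coef g al be != 0 -> forall i, (be i <= al i)%N.
Proof.
move=> nz i; apply/negPn/negP => lt_al_be; move: nz.
by rewrite /shift_coef (bigD1 i) //= (negbTE lt_al_be) mul0r eqxx.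
Qed.

Lemma mdeg_lt al be : (forall i, (be i <= al i)%N) -> be != al -> (mdeg be < mdeg al)%N.
Proof.
move=> le_be_al; case/eqP/ffunP/existsNP => i /eqP ne_i.
rewrite /mdeg (bigD1 i) //= [X in (_ < X)%N](bigD1 i) //= -addSn.
by apply: leq_add; [rewrite ltn_neqAle ne_i le_be_al | apply: leq_sum].
Qed.

(* The diagonal terms [be = al] cancel as the [f al] are [g]-periodic; the others
   with [shift_coef g al be != 0] have [mdeg be < mdeg al <= m]. *)
Lemma fdiff_poly_sum (f : mono -> pt -> C) g m :
  (forall al x, f al (x + g) = f al x) ->
  fdiff g (fun x => \sum_(al | (mdeg al < m.+1)%N) f al x * RC (monomial al x)) =
  fun x => \sum_(be | (mdeg be < m)%N)
    (\sum_(al | (mdeg al < m.+1)%N && (al != be)) RC (shift_coef g al be) * f al x) *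
      RC (monomial be x).
Proof.
move=> fper; apply/funext => x; rewrite /fdiff !fctE /=.
under eq_bigr => al _ do rewrite fper monomialD rmorph_sum mulr_sumr.
rewrite -sumrB; transitivity (\sum_(al | (mdeg al < m.+1)%N) \sum_be
    (if be != al then f al x * RC (shift_coef g al be) * RC (monomial be x) else 0)).
  apply: eq_bigr => al _; rewrite (bigD1 al) //= shift_coef_id mul1r.
  rewrite addrAC subrr add0r big_mkcond; apply: eq_bigr => be _.
  by case: ifP => // _; rewrite rmorphM mulrA; reflexivity.
rewrite exchange_big [RHS]big_mkcond; apply: eq_bigr => be _.
case: ifP => [lt_be_m|ge_be_m].
  rewrite mulr_suml big_mkcondr; apply: eq_bigr => al _.
  by rewrite eq_sym; case: ifP => // _; rewrite [f al x * _]mulrC.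
apply: big1 => al lt_al_m; case: ifP => // ne_be_al.
have [->|nz] := eqVneq (shift_coef g al be) 0; first by rewrite rmorph0 mulr0 mul0r.
have lt_be_al := mdeg_lt (shift_coef_le nz) ne_be_al.
by move: ge_be_m; rewrite (leq_trans lt_be_al) // -ltnS.
Qed.

End MonomialShift.

Section PeriodicPolynomials.
Variables (R : realType) (r : nat) (B : 'M[R]_r).
Local Notation pt := 'rV[R]_r.
Local Notation C := (complex.complex R).
Local Notation RC := (real_complex R).

Definition cont_periodic : set (pt -> C) :=
  [set f | ccontinuous f /\ lattice_periodic B f].

Lemma cont_periodic_subspace : linear_subspace cont_periodic.
Proof.
split=> [|a u v [cu pu] [cv pv]].
  by split=> [|k x] //; split; apply: cst_continuous.
split=> [|k x]; first exact: ccontinuous_scaleD.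
by rewrite !fctE pu pv.
Qed.

(* [PnG B D n] is [sol_space D `&` periodic_poly n n.+1]; the bound [N] on the
   individual exponents only fixes the index type of the sum. *)
Definition periodic_poly (N m : nat) : set (pt -> C) :=
  [set p | exists f : {ffun 'I_r -> 'I_N.+1} -> pt -> C,
     (forall al, cont_periodic (f al)) /\
     p = fun x => \sum_(al | (mdeg al < m)%N) f al x * RC (monomial al x)].

Lemma periodic_poly_subspace N m : linear_subspace (periodic_poly N m).
Proof.
split=> [|a _ _ [f [fper ->]] [h [hper ->]]].
  exists (fun _ => 0); split=> [al|]; first by case: cont_periodic_subspace.
  by apply/funext => x; rewrite big1 // => al _; rewrite mul0r.
exists (fun al => a *: f al + h al); split=> [al|].
  by case: cont_periodic_subspace => _; apply.
apply/funext => x; rewrite !fctE scaler_sumr -big_split; apply: eq_bigr => al _.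
by rewrite !fctE mulrDl scalerAl.
Qed.

Lemma periodic_poly0 N : periodic_poly N 0 `<=` [set 0].
Proof. by move=> _ [f [_ ->]]; apply/funext => x; rewrite big_pred0. Qed.

Lemma fdiff_periodic_poly N m k :
  periodic_poly N m.+1 `<=` fdiff (lattice_elt B k) @^-1` periodic_poly N m.
Proof.
set g := lattice_elt B k; move=> _ [f [fper ->]].
rewrite /preimage /= fdiff_poly_sum => [|al x]; last exact: (fper al).2.
exists (fun be => \sum_(al | (mdeg al < m.+1)%N && (al != be)) RC (shift_coef g al be) *: f al).
split=> [be|].
  apply: linear_subspace_sum cont_periodic_subspace _ => al _.
  exact: linear_subspaceZ cont_periodic_subspace (fper al).
by apply/funext => x; apply: eq_bigr => be _; rewrite fct_sumE.
Qed.

Lemma row_lattice_elt j : row j B = lattice_elt B (delta_mx 0 j).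
Proof.
rewrite rowE /lattice_elt; congr (_ *m _); apply/matrixP => a b.
by rewrite !mxE; case: (_ && _).
Qed.

Lemma lattice_periodic_rows (T : Type) (u : pt -> T) :
  (forall j x, u (x + row j B) = u x) -> lattice_periodic B u.
Proof.
move=> per k x; rewrite /lattice_elt mulmx_sum_row.
elim: (index_enum _) x => [|j s IHs] x; first by rewrite big_nil addr0.
by rewrite big_cons mxE scaler_int addrCA addrC periodic_mulz.
Qed.

Lemma fdiff_sol D k u :
  (forall a s, List.In (a, s) D -> ccontinuous a /\ lattice_periodic B a) ->
  classical_solution D u -> classical_solution D (fdiff (lattice_elt B k) u).
Proof.
move=> Dper Du; apply: (linear_subspaceB (sol_space_subspace D) _ Du).
by apply: classical_solution_comp_shift Du => -[a s] /Dper [_]; apply.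
Qed.

End PeriodicPolynomials.

Section FiniteDimension.
Variables (R : realType) (r : nat).
Local Notation pt := 'rV[R]_r.
Local Notation C := (complex.complex R).

Lemma finite_dimP (S : set (pt -> C)) : finite_dim S <-> finitely_spanned S.
Proof.
split=> [[N [b Sb]]|[s Ss]].
  exists [seq b j | j <- enum 'I_N] => u /Sb [c ->].
  by have := in_span_family b c; rewrite fct_sumE.
exists (size s), (fun j => s`_j) => u /Ss [c ->].
by exists (fun j => c j); apply/funext => x; rewrite fct_sumE.
Qed.

End FiniteDimension.

Lemma sol_periodic_poly_finitely_spanned (R : realType) (r : nat) (B : 'M[R]_r)
    (D : pdo R r) N m :
  (forall a s, List.In (a, s) D -> ccontinuous a /\ lattice_periodic B a) ->
  finitely_spanned (per_sol_space B D) ->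
  finitely_spanned (sol_space D `&` periodic_poly B N m).
Proof.
move=> Dper fin_per; elim: m => [|m IHm].
  by exists [::] => u [_ /periodic_poly0 ->]; apply: in_span0.
have sS := linear_subspaceI (sol_space_subspace D) (periodic_poly_subspace B N m.+1).
apply: (finitely_spanned_images_kernel (L := fun j => fdiff (row j B)) (s := enum 'I_r) sS).
  move=> j _; apply: finitely_spannedS IHm => _ [u [Du Pu] <-].
  rewrite row_lattice_elt; split; [exact: fdiff_sol | exact: fdiff_periodic_poly].
apply: finitely_spannedS fin_per => u [[Du _] ker]; split=> //.
by apply: lattice_periodic_rows => j; apply/fdiff_eq0/ker; rewrite mem_enum.
Qed.

Unset Implicit Arguments.

Theorem corollary3p5 (R : realType) (r : nat) (B : 'M[R]_r)
  (hB : B \in unitmx) (D : pdo R r)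
  (hcoef : forall a s, List.In (a, s) D -> ccontinuous a /\ lattice_periodic B a)
  (hfin : finite_dim (per_sol_space B D)) :
  forall n : nat, finite_dim (PnG B D n).
Proof.
move=> n; apply/finite_dimP.
have := sol_periodic_poly_finitely_spanned n n.+1 hcoef (proj1 (finite_dimP _) hfin).
by apply: finitely_spannedS => p.
Qed.
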